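(* Let $\mathbf{X}=(X_1,\dots,X_p)$ take values in $\{1,\dots,m\}^p$ and $Y$ take values in $\{0,1\}$, and let $\mathcal{C}\neq\emptyset$ be the class of joint distributions of $(\mathbf{X},Y)$ with prescribed pairwise marginals $\mathbb{P}(X_i=x_i,X_j=x_j)=\mu^{ij}_{x_ix_j}$ and $\mathbb{P}(X_i=x_i,Y=y)=\mu^i_{x_iy}$ for all $i,j$, $x_i,x_j$, $y$. Then $$\rho_m^{\mathrm{lb},\mathcal{C}}=\min_{\mathbb{P}_{\mathbf{X},Y}\in\mathcal{C}}\rho_m(\mathbf{X},Y)$$ if and only if there exists a distribution $\mathbb{P}\in\mathcal{C}$ and functions $f_i:\{1,\dots,m\}\to\mathbb{R}$, $i=1,\dots,p$, such that $\mathbb{E}_{\mathbb{P}}[Y\mid\mathbf{X}]=\sum_{i=1}^p f_i(X_i)$.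
   Context: The HGR maximal correlation under a joint law $\mathbb{P}$ is $\rho_m(\mathbf{X},Y)=\sup_{f,g}\mathbb{E}_{\mathbb{P}}[f(\mathbf{X})g(Y)]$ over all functions $f,g$ with $\mathbb{E}[f(\mathbf{X})]=\mathbb{E}[g(Y)]=0$, $\mathbb{E}[f^2(\mathbf{X})]=\mathbb{E}[g^2(Y)]=1$. The quantity $\rho_m^{\mathrm{lb}}(\mathbf{X},Y)$ is defined by the same maximization but with $f$ restricted to separable functions $f(\mathbf{X})=\sum_{i=1}^p\xi_i(X_i)$, $\xi_i:\{1,\dots,m\}\to\mathbb{R}$. This quantity depends only on the pairwise marginals, hence takes the same value for all $\mathbb{P}\in\mathcal{C}$; this common value is denoted $\rho_m^{\mathrm{lb},\mathcal{C}}$. Throughout, $0<\mathbb{P}(Y=1)<1$. *)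

From HB Require Import structures.
From mathcomp Require Import all_boot all_order all_algebra.
From mathcomp Require Import boolp classical_sets reals.
Set Implicit Arguments. Unset Strict Implicit. Unset Printing Implicit Defensive.
Import Order.TTheory GRing.Theory Num.Theory.
Local Open Scope ring_scope.
Local Open Scope classical_set_scope.

Section Defs.
Variables (R : realType) (p m : nat).

(* values of X = (X_1,...,X_p) in {1..m}^p; {1..m} is encoded as 'I_m *)
Definition Xval := {ffun 'I_p -> 'I_m}.

(* a joint law of (X,Y) on {1..m}^p x {0,1}; Y = 1 is encoded as true *)
Definition is_distr (P : Xval * bool -> R) : Prop :=
  (forall z, 0 <= P z) /\ \sum_(z : Xval * bool) P z = 1.

Definition Exp (P : Xval * bool -> R) (h : Xval -> bool -> R) : R :=
  \sum_(z : Xval * bool) P z * h z.1 z.2.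

Definition classC (mu2 : 'I_p -> 'I_p -> 'I_m -> 'I_m -> R)
    (mu1 : 'I_p -> 'I_m -> bool -> R) (P : Xval * bool -> R) : Prop :=
  is_distr P /\
  (forall i j a b,
     \sum_(z : Xval * bool | (z.1 i == a) && (z.1 j == b)) P z = mu2 i j a b) /\
  (forall i a y,
     \sum_(z : Xval * bool | (z.1 i == a) && (z.2 == y)) P z = mu1 i a y).

Definition admissible (P : Xval * bool -> R) (f : Xval -> R) (g : bool -> R) :=
  [/\ Exp P (fun x _ => f x) = 0, Exp P (fun _ y => g y) = 0,
      Exp P (fun x _ => f x ^+ 2) = 1 & Exp P (fun _ y => g y ^+ 2) = 1].

Definition rho_m (P : Xval * bool -> R) : R :=
  sup [set v | exists (f : Xval -> R) (g : bool -> R),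
        admissible P f g /\ v = Exp P (fun x y => f x * g y)].

Definition rho_lb (P : Xval * bool -> R) : R :=
  sup [set v | exists (xi : 'I_p -> 'I_m -> R) (g : bool -> R),
        let f := fun x : Xval => \sum_(i < p) xi i (x i) in
        admissible P f g /\ v = Exp P (fun x y => f x * g y)].

Definition PX (P : Xval * bool -> R) (x : Xval) : R := P (x, false) + P (x, true).

(* E_P[Y | X = x] = P(X = x, Y = 1) / P(X = x), meaningful when P(X = x) > 0 *)
Definition condExpY (P : Xval * bool -> R) (x : Xval) : R := P (x, true) / PX P x.

End Defs.

From HB Require Import structures.
From mathcomp Require Import all_boot all_order all_algebra.
From mathcomp Require Import boolp classical_sets reals.
From mathcomp Require Import ring lra.
Import Order.TTheory GRing.Theory Num.Theory.
Local Open Scope ring_scope.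
Set Implicit Arguments. Unset Strict Implicit. Unset Printing Implicit Defensive.

(* Write w(x) = P(X = x), s(x) = E[Y | X = x], q = P(Y = 1) and
   <a, b> = sum_x w(x) a(x) b(x).  For E f(X) = 0 and standardised g one has
   E[f(X) g(Y)] = (g(1) - g(0)) <s, f> with (g(1) - g(0))^2 q (1 - q) = 1, so by
   Cauchy-Schwarz rho_m = |s - q| / sqrt (q (1 - q)).  Restricting f to separable
   functions replaces s by its orthogonal projection pi onto them, so
   rho_lb = |pi - q| / sqrt (q (1 - q)).  Pythagoras,
   |s - q|^2 = |pi - q|^2 + |s - pi|^2, gives rho_lb <= rho_m with equality iff
   s = pi on the support of X.  Finally rho_lb only involves expectations of
   functions of (X_i, X_j) and of (X_i, Y), hence is the same for every law in C. *)

Section WeightedDot.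
Variables (R : realType) (T : finType) (w : T -> R).

Definition dotw (a b : T -> R) := \sum_x w x * a x * b x.

Lemma dotwC a b : dotw a b = dotw b a.
Proof. by apply: eq_bigr => x _; rewrite mulrAC. Qed.

Lemma dotwDl a1 a2 b : dotw (fun x => a1 x + a2 x) b = dotw a1 b + dotw a2 b.
Proof. by rewrite /dotw -big_split; apply: eq_bigr => x _ /=; ring. Qed.

Lemma dotwBl a1 a2 b : dotw (fun x => a1 x - a2 x) b = dotw a1 b - dotw a2 b.
Proof. by rewrite /dotw -sumrB; apply: eq_bigr => x _; ring. Qed.

Lemma dotwZl c a b : dotw (fun x => c * a x) b = c * dotw a b.
Proof. by rewrite /dotw mulr_sumr; apply: eq_bigr => x _; ring. Qed.

Lemma dotw_cstl c b : dotw (fun=> c) b = c * dotw (fun=> 1) b.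
Proof. by rewrite /dotw mulr_sumr; apply: eq_bigr => x _; ring. Qed.

Lemma dotwDr a b1 b2 : dotw a (fun x => b1 x + b2 x) = dotw a b1 + dotw a b2.
Proof. by rewrite dotwC dotwDl !(dotwC a). Qed.

Lemma dotwBr a b1 b2 : dotw a (fun x => b1 x - b2 x) = dotw a b1 - dotw a b2.
Proof. by rewrite dotwC dotwBl !(dotwC a). Qed.

Lemma dotwZr c a b : dotw a (fun x => c * b x) = c * dotw a b.
Proof. by rewrite dotwC dotwZl dotwC. Qed.

Lemma dotw_cstr a c : dotw a (fun=> c) = c * dotw (fun=> 1) a.
Proof. by rewrite dotwC dotw_cstl. Qed.

Lemma dotw_sqr_lin c1 c2 a b :
  dotw (fun x => c1 * a x + c2 * b x) (fun x => c1 * a x + c2 * b x) =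
  c1 ^+ 2 * dotw a a + 2 * c1 * c2 * dotw a b + c2 ^+ 2 * dotw b b.
Proof. by rewrite dotwDl !dotwDr !dotwZl !dotwZr (dotwC b a); ring. Qed.

Hypothesis w_ge0 : forall x, 0 <= w x.

Lemma dotw_ge0 a : 0 <= dotw a a.
Proof. by apply: sumr_ge0 => x _; rewrite -mulrA mulr_ge0 // -expr2 sqr_ge0. Qed.

Lemma eq_dotw_on_support c a b :
  (forall x, 0 < w x -> a x = b x) -> dotw c a = dotw c b.
Proof.
move=> eq_ab; apply: eq_bigr => x _.
by have := w_ge0 x; rewrite le0r => /orP[/eqP -> | /eq_ab ->]; rewrite ?mul0r.
Qed.

Lemma dotw_eq0 a : dotw a a = 0 -> forall x, 0 < w x -> a x = 0.
Proof.
move=> /eqP; rewrite psumr_eq0 => [/allP a0 x wx_gt0|x _]; last first.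
  by rewrite -mulrA mulr_ge0 // -expr2 sqr_ge0.
have := a0 x (mem_index_enum x).
by rewrite -mulrA mulf_eq0 (gt_eqF wx_gt0) /= mulf_eq0 orbb => /eqP.
Qed.

Lemma dotw_self_eq0 a b : dotw b b = 0 -> dotw a b = 0.
Proof.
move=> /dotw_eq0 b0; rewrite (@eq_dotw_on_support a b (fun=> 0)) //.
by apply: big1 => x _; rewrite mulr0.
Qed.

Lemma dotw_CauchySchwarz a b : dotw a b ^+ 2 <= dotw a a * dotw b b.
Proof.
have [b0 | bb_neq0] := eqVneq (dotw b b) 0.
  by rewrite b0 dotw_self_eq0 // expr0n mulr0.
have bb_gt0 : 0 < dotw b b by rewrite lt0r bb_neq0 dotw_ge0.
have := dotw_ge0 (fun x => dotw b b * a x + (- dotw a b) * b x).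
rewrite dotw_sqr_lin => h; nra.
Qed.

Fixpoint in_span (vs : seq (T -> R)) (f : T -> R) : Prop :=
  if vs is v :: vs' then exists c, in_span vs' (fun x => f x - c * v x)
  else forall x, f x = 0.

Lemma in_span_lin vs c1 c2 f g : in_span vs f -> in_span vs g ->
  in_span vs (fun x => c1 * f x + c2 * g x).
Proof.
elim: vs f g => [|v vs IH] f g /=; first by move=> f0 g0 x; rewrite f0 g0; ring.
move=> [a /IH span_f] [b /span_f span_fg]; exists (c1 * a + c2 * b).
by congr in_span: span_fg; apply: funext => x; ring.
Qed.

Lemma in_span_sum (I : Type) (e : I -> T -> R) (l : seq I) (c : I -> R) :
  in_span (map e l) (fun x => \sum_(j <- l) c j * e j x).
Proof.
elim: l => [|j l IH] /=; first by move=> x; rewrite big_nil.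
by exists (c j); congr in_span: IH; apply: funext => x; rewrite big_cons; ring.
Qed.

Lemma in_span_closed (S : (T -> R) -> Prop) (I : Type) (e : I -> T -> R) l f :
  S (fun=> 0) -> (forall c1 c2 f g, S f -> S g -> S (fun x => c1 * f x + c2 * g x)) ->
  (forall j, S (e j)) -> in_span (map e l) f -> S f.
Proof.
move=> S0 S_lin S_e; elim: l f => [|j l IH] f /=.
  by move=> f0; congr S: S0; apply: funext => x; rewrite f0.
move=> [c /IH S_fc]; have := S_lin 1 c _ _ S_fc (S_e j).
by congr S; apply: funext => x; ring.
Qed.

Lemma orthogonal_projection vs s : exists2 pi, in_span vs pi &
  forall g, in_span vs g -> dotw (fun x => s x - pi x) g = 0.
Proof.
elim: vs s => [|v vs IH] s.
  by exists (fun=> 0) => // g g0; apply: big1 => x _; rewrite g0 mulr0.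
have [pi1 span_pi1 orth_pi1] := IH s.
have [piv span_piv orth_piv] := IH v.
pose r x := v x - piv x.
(* Gram-Schmidt step; if <r, r> = 0 then al = 0 and r is orthogonal to all. *)
pose al := dotw (fun x => s x - pi1 x) r / dotw r r.
exists (fun x => pi1 x + al * r x).
  exists al; have := in_span_lin 1 (- al) span_pi1 span_piv.
  by congr in_span; apply: funext => x; rewrite /r; ring.
move=> g [a span_ga].
pose k x := 1 * (g x - a * v x) + a * piv x.
have span_k : in_span vs k by exact: in_span_lin.
have -> : g = (fun x => a * r x + 1 * k x).
  by apply: funext => x; rewrite /r /k; ring.
have -> : (fun x => s x - (pi1 x + al * r x)) =
          (fun x => 1 * (s x - pi1 x) + (- al) * r x).
  by apply: funext => x; ring.
rewrite dotwDr !dotwZr !dotwDl !dotwZl (orth_pi1 k) // (orth_piv k span_k : dotw r k = 0).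
have [rr0 | rr_neq0] := eqVneq (dotw r r) 0.
  by rewrite rr0 (dotw_self_eq0 _ rr0); ring.
by rewrite /al mulNr divfK //; ring.
Qed.

End WeightedDot.

Lemma sum_delta (R : pzSemiRingType) (I : finType) (i : I) (F : I -> R) :
  \sum_j (j == i)%:R * F j = F i.
Proof.
rewrite (bigD1 i) //= eqxx mul1r big1 ?addr0 // => j /negbTE ->.
exact: mul0r.
Qed.

Section Separable.
Variables (R : realType) (p m : nat).
Local Notation X := (Xval p m).

Definition separable (f : X -> R) :=
  exists xi : 'I_p -> 'I_m -> R, f = fun x => \sum_i xi i (x i).

Lemma separable_lin c1 c2 f g : separable f -> separable g ->
  separable (fun x => c1 * f x + c2 * g x).
Proof.
move=> [xi ->] [xi' ->]; exists (fun i a => c1 * xi i a + c2 * xi' i a).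
by apply: funext => x; rewrite big_split /= -!mulr_sumr.
Qed.

Lemma separable_cst : (0 < p)%N -> forall c, separable (fun=> c).
Proof.
move=> p_gt0 c; exists (fun i _ => (i == Ordinal p_gt0)%:R * c).
by apply: funext => x; rewrite sum_delta.
Qed.

Definition indicator (ia : 'I_p * 'I_m) (x : X) : R := (x ia.1 == ia.2)%:R.

Definition indicator_basis := map indicator (index_enum ('I_p * 'I_m)%type).

Lemma separable_in_span f : separable f <-> in_span indicator_basis f.
Proof.
split=> [[xi ->] | ]; last first.
  apply: in_span_closed => [|c1 c2 g h|[i a]].
  - by exists (fun _ _ => 0); apply: funext => x; rewrite big1.
  - exact: separable_lin.
  exists (fun j b => (j == i)%:R * (b == a)%:R).
  by apply: funext => x; rewrite sum_delta.
have := in_span_sum indicator (index_enum _) (fun ia => xi ia.1 ia.2).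
congr in_span; apply: funext => x.
rewrite -(pair_bigA _ (fun i a => xi i a * indicator (i, a) x)).
apply: eq_bigr => i _ /=; rewrite -[RHS](sum_delta (x i) (xi i)).
by apply: eq_bigr => a _; rewrite mulrC /indicator eq_sym.
Qed.

Lemma separable_projection (w s : X -> R) : (forall x, 0 <= w x) ->
  exists2 pi, separable pi &
  forall f, separable f -> dotw w (fun x => s x - pi x) f = 0.
Proof.
move=> w_ge0; have [pi span_pi orth_pi] := orthogonal_projection w_ge0 indicator_basis s.
by exists pi => [|f /separable_in_span]; [apply/separable_in_span | exact: orth_pi].
Qed.

End Separable.

Section Law.
Variables (R : realType) (p m : nat).
Local Notation X := (Xval p m).
Variable P : X * bool -> R.

Definition probY1 := Exp P (fun _ y => (y : nat)%:R).

Definition corr_values (S : (X -> R) -> Prop) : set R :=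
  [set t | exists f g, S f /\ admissible P f g /\ t = Exp P (fun x y => f x * g y)].

Lemma rho_mE : rho_m P = sup (corr_values (fun=> True)).
Proof.
rewrite /rho_m; congr sup; apply/seteqP; split=> t /=.
  by move=> [f [g [adm ->]]]; exists f, g.
by move=> [f [g [_ [adm ->]]]]; exists f, g.
Qed.

Lemma rho_lbE : rho_lb P = sup (corr_values (@separable R p m)).
Proof.
rewrite /rho_lb; congr sup; apply/seteqP; split=> t /=.
  move=> [xi [g [adm ->]]]; exists (fun x => \sum_i xi i (x i)), g.
  by split; first exists xi.
by move=> [f [g [[xi ->] [adm ->]]]]; exists xi, g.
Qed.

Hypothesis P_distr : is_distr P.

Local Notation w := (PX P).
Local Notation s := (condExpY P).
Local Notation q := probY1.
Local Notation dot := (dotw w).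

Lemma PX_ge0 x : 0 <= w x.
Proof. by rewrite addr_ge0 //; apply: P_distr.1. Qed.

Lemma ExpE h : Exp P h = \sum_x (P (x, false) * h x false + P (x, true) * h x true).
Proof.
rewrite [RHS](eq_bigr (fun x => \sum_b P (x, b) * h x b)).
  by rewrite pair_bigA; apply: eq_bigr => -[x b].
by move=> x _; rewrite big_bool addrC.
Qed.

Lemma P_trueE x : P (x, true) = w x * s x.
Proof.
have [w0 | w_neq0] := eqVneq (w x) 0; last by rewrite /condExpY mulrC divfK.
have := P_distr.1 (x, false); have := P_distr.1 (x, true).
by rewrite w0 mul0r; move: w0; rewrite /PX; lra.
Qed.

Lemma Exp_X f : Exp P (fun x _ => f x) = dot (fun=> 1) f.
Proof. by rewrite ExpE; apply: eq_bigr => x _; rewrite /PX; ring. Qed.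

Lemma Exp_Xsqr f : Exp P (fun x _ => f x ^+ 2) = dot f f.
Proof. by rewrite ExpE; apply: eq_bigr => x _; rewrite /PX; ring. Qed.

Lemma Exp_XY f g : Exp P (fun x y => f x * g y) =
  g false * dot (fun=> 1) f + (g true - g false) * dot s f.
Proof.
rewrite ExpE /dotw !mulr_sumr -big_split; apply: eq_bigr => x _ /=.
have -> : P (x, false) = w x - P (x, true) by rewrite /PX; ring.
rewrite P_trueE; ring.
Qed.

Lemma dot_1_1 : dot (fun=> 1) (fun=> 1) = 1.
Proof.
rewrite -Exp_X -[RHS]P_distr.2; apply: eq_bigr => z _.
by rewrite mulr1.
Qed.

Lemma dot_1_condExp : dot (fun=> 1) s = q.
Proof.
rewrite /probY1 ExpE; apply: eq_bigr => x _ /=.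
by rewrite P_trueE; ring.
Qed.

Lemma Exp_Y g : Exp P (fun _ y => g y) = g false + (g true - g false) * q.
Proof.
transitivity (Exp P (fun x y => (fun=> 1) x * g y)).
  by apply: eq_bigr => z _; rewrite mul1r.
by rewrite Exp_XY dot_1_1 (dotwC _ s) dot_1_condExp mulr1.
Qed.

Lemma standardized_Y g : Exp P (fun _ y => g y) = 0 ->
  Exp P (fun _ y => g y ^+ 2) = 1 -> (g true - g false) ^+ 2 * (q * (1 - q)) = 1.
Proof.
rewrite !Exp_Y => Eg Eg2.
have -> : (g true - g false) ^+ 2 * (q * (1 - q)) =
    (g false ^+ 2 + (g true ^+ 2 - g false ^+ 2) * q) -
    (g false + (g true - g false) * q) ^+ 2 by ring.
by rewrite Eg Eg2; ring.
Qed.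

End Law.

Section MaximalCorrelation.
Local Open Scope classical_set_scope.
Variables (R : realType) (p m : nat).
Local Notation X := (Xval p m).
Variable P : X * bool -> R.
Hypotheses (P_distr : is_distr P) (q01 : 0 < probY1 P < 1).

Local Notation w := (PX P).
Local Notation s := (condExpY P).
Local Notation q := (probY1 P).
Local Notation dot := (dotw w).
Local Notation sigma := (Num.sqrt (q * (1 - q))).

Let w_ge0 := PX_ge0 P_distr.

Lemma sigmaY_gt0 : 0 < sigma.
Proof. by case/andP: q01 => q_gt0 q_lt1; rewrite sqrtr_gt0 mulr_gt0 // subr_gt0. Qed.

Lemma sigmaY_sqr : sigma ^+ 2 = q * (1 - q).
Proof.
by case/andP: q01 => q_gt0 q_lt1; rewrite sqr_sqrtr // ltW // mulr_gt0 // subr_gt0.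
Qed.

Section SupCorrValues.
Variables (S : (X -> R) -> Prop) (v : X -> R).
Hypothesis condExp_S : forall f, S f -> dot (fun=> 1) f = 0 -> dot s f = dot v f.
Hypothesis v_centered : dot (fun=> 1) v = 0.
Hypothesis S_normalized_v :
  0 < dot v v -> S (fun x => (Num.sqrt (dot v v))^-1 * v x).

Lemma corr_value_sqr_le t : corr_values P S t -> (t * sigma) ^+ 2 <= dot v v.
Proof.
move=> [f [g [Sf [[Ef Eg Ef2 Eg2] ->]]]].
rewrite Exp_X in Ef; rewrite Exp_Xsqr in Ef2.
rewrite Exp_XY // Ef mulr0 add0r condExp_S //.
have -> : ((g true - g false) * dot v f * sigma) ^+ 2 =
    dot v f ^+ 2 * ((g true - g false) ^+ 2 * sigma ^+ 2) by ring.
rewrite sigmaY_sqr standardized_Y // mulr1 -[leRHS]mulr1 -Ef2.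
exact: dotw_CauchySchwarz.
Qed.

Lemma corr_value_attained :
  0 < dot v v -> corr_values P S (Num.sqrt (dot v v) / sigma).
Proof.
move=> vv_gt0; set sA := Num.sqrt (dot v v).
have sA_neq0 : sA != 0 by rewrite sqrtr_eq0 -ltNge.
have sig_neq0 : sigma != 0 by rewrite gt_eqF // sigmaY_gt0.
have sA_sqr : dot v v = sA ^+ 2 by rewrite sqr_sqrtr // ltW.
have f_centered : dot (fun=> 1) (fun x => sA^-1 * v x) = 0.
  by rewrite dotwZr v_centered mulr0.
exists (fun x => sA^-1 * v x), (fun y => if y then (1 - q) / sigma else - q / sigma).
split; first exact: S_normalized_v.
split; first split.
- by rewrite Exp_X.
- by rewrite Exp_Y //=; field.
- by rewrite Exp_Xsqr dotwZl dotwZr sA_sqr; field.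
- rewrite (Exp_Y P_distr (fun y => (if y then (1 - q) / sigma else - q / sigma) ^+ 2)) /=.
  have -> : (- q / sigma) ^+ 2 + (((1 - q) / sigma) ^+ 2 - (- q / sigma) ^+ 2) * q =
      q * (1 - q) / sigma ^+ 2 by field.
  by rewrite -[X in X / _]sigmaY_sqr divff // sqrf_eq0.
rewrite Exp_XY // f_centered /= mulr0 add0r condExp_S //; last exact: S_normalized_v.
by rewrite dotwZr sA_sqr; field; rewrite sA_neq0 sig_neq0.
Qed.

Lemma sup_corr_values : sup (corr_values P S) = Num.sqrt (dot v v) / sigma.
Proof.
have [vv_gt0 | vv_le0] := ltrP 0 (dot v v).
  have ub : ubound (corr_values P S) (Num.sqrt (dot v v) / sigma).
    move=> t /corr_value_sqr_le tv; rewrite ler_pdivlMr ?sigmaY_gt0 //.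
    by apply: le_trans (ler_norm _) _; rewrite -sqrtr_sqr ler_wsqrtr.
  apply/le_anti/andP; split.
    apply: ge_sup => //; exists (Num.sqrt (dot v v) / sigma).
    exact: corr_value_attained.
  by apply: ub_le_sup; [exists (Num.sqrt (dot v v) / sigma) | exact: corr_value_attained].
rewrite ler0_sqrtr // mul0r.
have sub0 : corr_values P S `<=` [set 0].
  move=> t /corr_value_sqr_le tv; have : (t * sigma) ^+ 2 == 0.
    by rewrite eq_le sqr_ge0 (le_trans tv).
  by rewrite sqrf_eq0 mulf_eq0 (gt_eqF sigmaY_gt0) orbF => /eqP.
by case: (subset_set1 sub0) => ->; rewrite ?sup0 ?sup1.
Qed.

End SupCorrValues.

Hypothesis p_gt0 : (0 < p)%N.

Lemma rho_m_formula :
  rho_m P = Num.sqrt (dot (fun x => s x - q) (fun x => s x - q)) / sigma.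
Proof.
rewrite rho_mE; apply: sup_corr_values => [f _ f_centered | | //].
  by rewrite dotwBl dotw_cstl f_centered mulr0 subr0.
by rewrite dotwBr dot_1_condExp // dotw_cstr dot_1_1 // mulr1 subrr.
Qed.

Section Projection.
Variable pi : X -> R.
Hypotheses (pi_sep : separable pi)
  (pi_orth : forall f, separable f -> dot (fun x => s x - pi x) f = 0).

Lemma separable_proj_centered : separable (fun x => pi x - q).
Proof.
have := separable_lin 1 (- q) pi_sep (separable_cst m p_gt0 1).
by congr separable; apply: funext => x; ring.
Qed.

Lemma rho_lb_formula :
  rho_lb P = Num.sqrt (dot (fun x => pi x - q) (fun x => pi x - q)) / sigma.
Proof.
have dot_1_pi : dot (fun=> 1) pi = q.
  have := pi_orth (separable_cst m p_gt0 1).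
  by rewrite dotwC dotwBr dot_1_condExp // => h; lra.
rewrite rho_lbE; apply: sup_corr_values => [f sep_f f_centered | | _].
- rewrite dotwBl dotw_cstl f_centered mulr0 subr0.
  by have := pi_orth sep_f; rewrite dotwBl => h; lra.
- by rewrite dotwBr dotw_cstr dot_1_pi dot_1_1 // mulr1 subrr.
have := separable_lin (Num.sqrt (dot (fun x => pi x - q) (fun x => pi x - q)))^-1 0
  separable_proj_centered separable_proj_centered.
by congr separable; apply: funext => x; ring.
Qed.

Lemma dot_condExp_pythagoras :
  dot (fun x => s x - q) (fun x => s x - q) =
  dot (fun x => pi x - q) (fun x => pi x - q) +
  dot (fun x => s x - pi x) (fun x => s x - pi x).
Proof.
have -> : (fun x => s x - q) = (fun x => 1 * (pi x - q) + 1 * (s x - pi x)).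
  by apply: funext => x; ring.
rewrite dotw_sqr_lin (dotwC _ (fun x => pi x - q)) (pi_orth separable_proj_centered).
by ring.
Qed.

End Projection.

Lemma rho_lb_le_rho_m : rho_lb P <= rho_m P.
Proof.
have [pi pi_sep pi_orth] := separable_projection s w_ge0.
rewrite (rho_lb_formula pi_sep pi_orth) rho_m_formula.
rewrite (dot_condExp_pythagoras pi_sep pi_orth).
by rewrite ler_pM2r ?invr_gt0 ?sigmaY_gt0 // ler_wsqrtr // lerDl dotw_ge0.
Qed.

Lemma rho_m_eq_rho_lb : rho_m P = rho_lb P <->
  exists xi : 'I_p -> 'I_m -> R, forall x, 0 < w x -> s x = \sum_i xi i (x i).
Proof.
have [pi pi_sep pi_orth] := separable_projection s w_ge0.
rewrite (rho_lb_formula pi_sep pi_orth) rho_m_formula.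
rewrite (dot_condExp_pythagoras pi_sep pi_orth).
set A := dot (fun x => pi x - q) _; set B := dot (fun x => s x - pi x) _.
have A_ge0 : 0 <= A by exact: dotw_ge0.
have B_ge0 : 0 <= B by exact: dotw_ge0.
have -> : (Num.sqrt (A + B) / sigma = Num.sqrt A / sigma) <-> B = 0.
  split=> [|->]; last by rewrite addr0.
  have sig_inv_neq0 : sigma^-1 != 0 by rewrite invr_neq0 // gt_eqF // sigmaY_gt0.
  move=> /(mulIf sig_inv_neq0)/(congr1 (fun t => t ^+ 2)).
  by rewrite !sqr_sqrtr ?addr_ge0 // => h; lra.
split=> [B0 | [xi s_sep]].
  have [xi pi_xi] := pi_sep; exists xi => x wx_gt0.
  have /eqP := dotw_eq0 w_ge0 B0 wx_gt0.
  by rewrite subr_eq0 pi_xi => /eqP.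
rewrite /B dotwBr (pi_orth _ pi_sep) subr0.
rewrite (@eq_dotw_on_support _ _ _ w_ge0 _ _ (fun x => \sum_i xi i (x i))) //.
by apply: pi_orth; exists xi.
Qed.

End MaximalCorrelation.

Section PairwiseMarginals.
Local Open Scope classical_set_scope.
Variables (R : realType) (p m : nat).
Local Notation X := (Xval p m).
Variables (mu2 : 'I_p -> 'I_p -> 'I_m -> 'I_m -> R) (mu1 : 'I_p -> 'I_m -> bool -> R).

Definition C_invariant (h : X -> bool -> R) :=
  forall P P', classC mu2 mu1 P -> classC mu2 mu1 P' -> Exp P h = Exp P' h.

Lemma sum_pushforward (K : finType) (k : X * bool -> K) (F : K -> R) (P : X * bool -> R) :
  \sum_z P z * F (k z) = \sum_c F c * \sum_(z | k z == c) P z.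
Proof.
rewrite (partition_big k xpredT) //=; apply: eq_bigr => c _.
by rewrite mulr_sumr; apply: eq_bigr => z /eqP <-; rewrite mulrC.
Qed.

Lemma C_invariant_XX i j (F : 'I_m -> 'I_m -> R) : C_invariant (fun x _ => F (x i) (x j)).
Proof.
move=> P P' hP hP'.
rewrite /Exp !(sum_pushforward (fun z => (z.1 i, z.1 j)) (fun c => F c.1 c.2)).
apply: eq_bigr => -[a b] _; congr (_ * _).
have marg Q : classC mu2 mu1 Q ->
    \sum_(z : X * bool | (z.1 i, z.1 j) == (a, b)) Q z = mu2 i j a b.
  by move=> [_ [mu2Q _]]; rewrite -mu2Q; apply: eq_bigl => z; rewrite xpair_eqE.
by rewrite !marg.
Qed.

Lemma C_invariant_XY i (F : 'I_m -> bool -> R) : C_invariant (fun x y => F (x i) y).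
Proof.
move=> P P' hP hP'.
rewrite /Exp !(sum_pushforward (fun z => (z.1 i, z.2)) (fun c => F c.1 c.2)).
apply: eq_bigr => -[a y] _; congr (_ * _).
have marg Q : classC mu2 mu1 Q ->
    \sum_(z : X * bool | (z.1 i, z.2) == (a, y)) Q z = mu1 i a y.
  by move=> [_ [_ mu1Q]]; rewrite -mu1Q; apply: eq_bigl => z; rewrite xpair_eqE.
by rewrite !marg.
Qed.

Lemma C_invariant_sum (I : finType) (h : I -> X -> bool -> R) :
  (forall i, C_invariant (h i)) -> C_invariant (fun x y => \sum_i h i x y).
Proof.
move=> h_inv P P' hP hP'.
have Exp_sum Q : Exp Q (fun x y => \sum_i h i x y) = \sum_i Exp Q (h i).
  by rewrite /Exp exchange_big; apply: eq_bigr => z _; rewrite mulr_sumr.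
by rewrite !Exp_sum; apply: eq_bigr => i _; exact: h_inv.
Qed.

Lemma rho_lb_C_invariant : (0 < p)%N ->
  forall P P', classC mu2 mu1 P -> classC mu2 mu1 P' -> rho_lb P = rho_lb P'.
Proof.
move=> p_gt0.
have inv_Y (g : bool -> R) : C_invariant (fun _ y => g y).
  exact: (C_invariant_XY (Ordinal p_gt0) (fun _ y => g y)).
suff sub Q Q' : classC mu2 mu1 Q -> classC mu2 mu1 Q' ->
    [set v | exists xi g, let f := fun x : X => \sum_i xi i (x i) in
       admissible Q f g /\ v = Exp Q (fun x y => f x * g y)] `<=`
    [set v | exists xi g, let f := fun x : X => \sum_i xi i (x i) in
       admissible Q' f g /\ v = Exp Q' (fun x y => f x * g y)].
  by move=> P P' hP hP'; congr sup; apply/seteqP; split; exact: sub.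
move=> hQ hQ' t [xi [g [[Ef Eg Ef2 Eg2] ->]]]; exists xi, g.
have inv_f : C_invariant (fun x _ => \sum_i xi i (x i)).
  apply: (@C_invariant_sum _ (fun i x _ => xi i (x i))) => i.
  exact: (C_invariant_XX i i (fun a _ => xi i a)).
have inv_f2 : C_invariant (fun x _ => (\sum_i xi i (x i)) ^+ 2).
  have -> : (fun (x : X) (_ : bool) => (\sum_i xi i (x i)) ^+ 2) =
      (fun x _ => \sum_i \sum_j xi i (x i) * xi j (x j)).
    apply: funext => x; apply: funext => _.
    by rewrite expr2 mulr_suml; apply: eq_bigr => i _; rewrite mulr_sumr.
  apply: (@C_invariant_sum _ (fun i x _ => \sum_j xi i (x i) * xi j (x j))) => i.
  apply: (@C_invariant_sum _ (fun j x _ => xi i (x i) * xi j (x j))) => j.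
  exact: (C_invariant_XX i j (fun a b => xi i a * xi j b)).
have inv_fg : C_invariant (fun x y => (\sum_i xi i (x i)) * g y).
  have -> : (fun (x : X) y => (\sum_i xi i (x i)) * g y) =
      (fun x y => \sum_i xi i (x i) * g y).
    by apply: funext => x; apply: funext => y; rewrite mulr_suml.
  apply: (@C_invariant_sum _ (fun i x y => xi i (x i) * g y)) => i.
  exact: (C_invariant_XY i (fun a y => xi i a * g y)).
split; first split.
- by rewrite -(inv_f _ _ hQ hQ').
- by rewrite -(inv_Y g _ _ hQ hQ').
- by rewrite -(inv_f2 _ _ hQ hQ').
- by rewrite -(inv_Y (fun y => g y ^+ 2) _ _ hQ hQ').
exact: inv_fg.
Qed.

End PairwiseMarginals.

Theorem theorem3 (R : realType) (p m : nat)
    (mu2 : 'I_p -> 'I_p -> 'I_m -> 'I_m -> R) (mu1 : 'I_p -> 'I_m -> bool -> R) :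
  (0 < p)%N ->
  (exists P : Xval p m * bool -> R, classC mu2 mu1 P) ->
  (forall P : Xval p m * bool -> R, classC mu2 mu1 P ->
     0 < Exp P (fun _ y => (y : nat)%:R) < 1) ->
  forall P0 : Xval p m * bool -> R, classC mu2 mu1 P0 ->
  ((* rho_m^{lb,C} is the minimum of rho_m over C *)
   (exists P : Xval p m * bool -> R, classC mu2 mu1 P /\ rho_m P = rho_lb P0) /\
   (forall P : Xval p m * bool -> R, classC mu2 mu1 P -> rho_lb P0 <= rho_m P))
  <->
  (exists (P : Xval p m * bool -> R) (f : 'I_p -> 'I_m -> R),
     classC mu2 mu1 P /\
     forall x : Xval p m, 0 < PX P x ->
       condExpY P x = \sum_(i < p) f i (x i)).
Proof.
move=> p_gt0 _ q01 P0 hP0.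
have rho_lb_P0 P : classC mu2 mu1 P -> rho_lb P0 = rho_lb P.
  exact: rho_lb_C_invariant p_gt0 P0 P hP0.
split=> [[[P [hP rho_eq]] _] | [P [xi [hP cond_xi]]]].
  have rho_m_P : rho_m P = rho_lb P by rewrite rho_eq (rho_lb_P0 P hP).
  have [xi cond_xi] := (rho_m_eq_rho_lb hP.1 (q01 P hP) p_gt0).1 rho_m_P.
  by exists P, xi.
split.
  exists P; split=> //; rewrite (rho_lb_P0 P hP).
  by apply/(rho_m_eq_rho_lb hP.1 (q01 P hP) p_gt0); exists xi.
move=> P' hP'; rewrite (rho_lb_P0 P' hP').
exact: rho_lb_le_rho_m hP'.1 (q01 P' hP') p_gt0.
Qed.
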